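(* Let $(L,\mathcal P)$, $\mathcal P=(P_n)_{n\in\mathbb{N}}$, be an $x$–$y$ grain line in a graph $G$, let $\ell_1,\ell_2\in L$ with $\ell_1<_L\ell_2$, and let $N\in\mathbb{N}$ be such that $P_N$ grains $\{\ell_1,\ell_2\}$. Then $([\ell_1,\ell_2]_L,(\ell_1P_n\ell_2)_{n\ge N})$, with $[\ell_1,\ell_2]_L$ carrying the restriction of $\le_L$, is an $\ell_1$–$\ell_2$ grain line in $G$; moreover, it is wildly presented if $(L,\mathcal P)$ is wildly presented.
   Context: Graphs are simple and may be infinite; $\mathbb{N}=\{0,1,2,\dots\}$. An $a$–$b$ path $P$ induces the linear order $\le_P$ of traversal from $a$ to $b$ on $V(P)$; for vertices $s,t$ on $P$, $sPt$ denotes the subpath of $P$ between them. For distinct vertices $a,b$ and $M\in\mathbb{N}$, an $a$–$b$ grain line in $G$ (indexed from $M$) is a pair $(L,\mathcal P)$ where $L\subseteq V(G)$ is a countable set with a linear order $\le_L$ having least element $a$ and greatest element $b$, and $\mathcal P=(P_n)_{n\ge M}$ is a sequence of pairwise edge-disjoint $a$–$b$ paths in $G$, such that: (GL1) $L$ is exactly the set of vertices $v$ for which $\{n\ge M: v\in V(P_n)\}$ is a non-empty final segment $\{n:n\ge m\}$ of $\{n\in\mathbb{N}:n\ge M\}$; (GL2) if a vertex of $P_n$ is not in $L$, it lies on no $P_m$ with $m\ne n$; (GL3) for every $n\ge M$, $\le_{P_n}$ and $\le_L$ induce the same linear order on $L_{<n}:=L\cap\bigcup_{M\le k<n}V(P_k)$.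 Interval notation: $[\ell,\ell']_L=\{\ell''\in L:\ell\le_L\ell''\le_L\ell'\}$, $(\ell,\ell')_L$ the corresponding open interval. A path $P_n$ grains a vertex set $U$ if for every $m\ge n$ we have $V(P_m)\cap U=L\cap U$ and $\le_{P_m}$ and $\le_L$ induce the same linear order on this set. A grain line is wildly presented if for every $n$ and all $\ell<_L\ell'$ in $L_{<n}$, the subpath $\ell P_n\ell'$ has a vertex in $(\ell,\ell')_L$. *)

From Stdlib Require Import List Arith Lia.
Import ListNotations.

Record graph := Graph {
  vtx : Type;
  adj : vtx -> vtx -> Prop;
  adj_sym : forall u v, adj u v -> adj v u;
  adj_irrefl : forall v, ~ adj v v
}.

Section Defs.
Variable G : graph.
Notation V := (vtx G).

Definition first (p : list V) : option V := hd_error p.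
Definition final (p : list V) : option V := hd_error (rev p).

Definition is_path (p : list V) : Prop :=
  p <> [] /\ NoDup p /\
  forall i u v, nth_error p i = Some u -> nth_error p (S i) = Some v -> adj G u v.

Definition is_ab_path (a b : V) (p : list V) : Prop :=
  is_path p /\ first p = Some a /\ final p = Some b.

Definition has_edge (p : list V) (u v : V) : Prop :=
  exists i, (nth_error p i = Some u /\ nth_error p (S i) = Some v) \/
            (nth_error p i = Some v /\ nth_error p (S i) = Some u).

Definition edge_disjoint (p q : list V) : Prop :=
  forall u v, ~ (has_edge p u v /\ has_edge q u v).

Definition leP (p : list V) (u v : V) : Prop :=
  exists i j, nth_error p i = Some u /\ nth_error p j = Some v /\ i <= j.

(* q is the subpath sPt of p, traversed from s to t *)
Definition is_subpath (p : list V) (s t : V) (q : list V) : Prop :=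
  exists l1 q' l2, p = l1 ++ q' ++ l2 /\ (q = q' \/ q = rev q') /\
    first q = Some s /\ final q = Some t.

Definition linear_order_on (L : V -> Prop) (le : V -> V -> Prop) : Prop :=
  (forall u, L u -> le u u) /\
  (forall u v, L u -> L v -> le u v -> le v u -> u = v) /\
  (forall u v w, L u -> L v -> L w -> le u v -> le v w -> le u w) /\
  (forall u v, L u -> L v -> le u v \/ le v u).

Definition ltL (le : V -> V -> Prop) (u v : V) : Prop := le u v /\ u <> v.

Definition countable_set (L : V -> Prop) : Prop :=
  exists f : V -> nat, forall u v, L u -> L v -> f u = f v -> u = v.

Definition L_below (M : nat) (L : V -> Prop) (P : nat -> list V) (n : nat) (v : V) : Prop :=
  L v /\ exists k, M <= k /\ k < n /\ In v (P k).

Definition grain_line (M : nat) (a b : V) (L : V -> Prop) (le : V -> V -> Prop)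
    (P : nat -> list V) : Prop :=
  a <> b /\
  countable_set L /\
  linear_order_on L le /\
  L a /\ L b /\
  (forall v, L v -> le a v) /\ (forall v, L v -> le v b) /\
  (forall n, M <= n -> is_ab_path a b (P n)) /\
  (forall n m, M <= n -> M <= m -> n <> m -> edge_disjoint (P n) (P m)) /\
  (forall v, L v <-> exists m, M <= m /\ forall n, M <= n -> (In v (P n) <-> m <= n)) /\
  (forall n v, M <= n -> In v (P n) -> ~ L v ->
     forall m, M <= m -> m <> n -> ~ In v (P m)) /\
  (forall n, M <= n -> forall u v, L_below M L P n u -> L_below M L P n v ->
     (leP (P n) u v <-> le u v)).

Definition grains (L : V -> Prop) (le : V -> V -> Prop) (P : nat -> list V)
    (n : nat) (U : V -> Prop) : Prop :=
  forall m, n <= m ->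
    (forall v, U v -> (In v (P m) <-> L v)) /\
    (forall u v, U u -> U v -> L u -> L v -> (leP (P m) u v <-> le u v)).

Definition wildly_presented (M : nat) (L : V -> Prop) (le : V -> V -> Prop)
    (P : nat -> list V) : Prop :=
  forall n, M <= n -> forall l l', L_below M L P n l -> L_below M L P n l' ->
    ltL le l l' ->
    forall q, is_subpath (P n) l l' q ->
      exists w, In w q /\ L w /\ ltL le l w /\ ltL le w l'.

End Defs.

From Stdlib Require Import List Arith Lia Classical.
Import ListNotations.

(* Since P_N grains {l1, l2}, every later P_n traverses l1 before l2, so
   Q_n = l1 P_n l2 is a forward segment of P_n, consisting of the vertices
   between l1 and l2 in the order of P_n.  For a vertex v of L already lying on
   some P_j with N <= j < n, (GL3) turns this into l1 <=_L v <=_L l2.  So once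
   a vertex of L has appeared, it lies on all later Q_n exactly when it is in
   [l1, l2]_L, and each axiom of the segment (and wildness) is inherited from
   the corresponding axiom of (L, P). *)

Lemma upward_closed_final_segment (p : nat -> Prop) (k : nat) :
  p k -> (forall n, p n -> p (S n)) -> exists m, forall n, p n <-> m <= n.
Proof.
  intros Hk Hup.
  destruct (dec_inh_nat_subset_has_unique_least_element p (fun n => classic (p n)))
    as [m [[Hm Hmin] _]]; [eauto|].
  exists m. intros n. split; [apply Hmin|].
  intros Hmn. induction Hmn; auto.
Qed.

Lemma nth_error_segment {T : Type} (A q B : list T) k v :
  nth_error q k = Some v -> nth_error (A ++ q ++ B) (length A + k) = Some v.
Proof.
  intros Hk. assert (k < length q) by (apply nth_error_Some; congruence).
  rewrite nth_error_app2, nth_error_app1 by lia.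
  now replace (length A + k - length A) with k by lia.
Qed.

Lemma nth_error_segment_inv {T : Type} (A q B : list T) i v :
  length A <= i < length A + length q ->
  nth_error (A ++ q ++ B) i = Some v -> nth_error q (i - length A) = Some v.
Proof.
  intros Hi. now rewrite nth_error_app2, nth_error_app1 by lia.
Qed.

Lemma NoDup_nth_error_inj {T : Type} (p : list T) i j v :
  NoDup p -> nth_error p i = Some v -> nth_error p j = Some v -> i = j.
Proof.
  intros Hp Hi Hj. apply (proj1 (NoDup_nth_error p) Hp); [|congruence].
  apply nth_error_Some. congruence.
Qed.

Section Segments.
Variable G : graph.
Implicit Types (A B p q r : list (vtx G)) (a b s t u v : vtx G).

Lemma leP_antisym p u v : NoDup p -> leP G p u v -> leP G p v u -> u = v.
Proof.
  intros Hp (i & j & Hi & Hj & Hij) (j' & i' & Hj' & Hi' & Hji).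
  assert (i = i') by (eapply NoDup_nth_error_inj; eauto).
  assert (j = j') by (eapply NoDup_nth_error_inj; eauto).
  subst. replace j' with i' in Hj by lia. congruence.
Qed.

Lemma first_Some_cons q a : first G q = Some a -> exists q', q = a :: q'.
Proof.
  destruct q as [|a' q']; simpl; intros H; [discriminate|].
  injection H as ->. eauto.
Qed.

Lemma final_Some_snoc q b : final G q = Some b -> exists q', q = q' ++ [b].
Proof.
  unfold final. intros H. destruct (rev q) as [|b' r] eqn:E; simpl in H; [discriminate|].
  injection H as ->. exists (rev r).
  now rewrite <- (rev_involutive q), E.
Qed.

Lemma In_segment_iff_leP A q B a b v :
  NoDup (A ++ q ++ B) -> first G q = Some a -> final G q = Some b ->
  In v q <-> leP G (A ++ q ++ B) a v /\ leP G (A ++ q ++ B) v b.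
Proof.
  intros Hp Ha Hb.
  destruct (first_Some_cons _ _ Ha) as [q0 Eq0].
  destruct (final_Some_snoc _ _ Hb) as [q1 Eq1].
  assert (Hlen : length q = S (length q1)) by (rewrite Eq1, length_app; simpl; lia).
  assert (HA : nth_error (A ++ q ++ B) (length A + 0) = Some a)
    by (apply nth_error_segment; now rewrite Eq0).
  assert (HB : nth_error (A ++ q ++ B) (length A + length q1) = Some b).
  { apply nth_error_segment. rewrite Eq1, nth_error_app2, Nat.sub_diag by lia.
    reflexivity. }
  split.
  - intros Hv. destruct (In_nth_error _ _ Hv) as [k Hk].
    assert (k < length q) by (apply nth_error_Some; congruence).
    pose proof (nth_error_segment A q B _ _ Hk).
    split; [exists (length A + 0), (length A + k)
           | exists (length A + k), (length A + length q1)];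
      repeat split; auto; lia.
  - intros [(i & j & Hi & Hj & Hij) (j' & i' & Hj' & Hi' & Hji)].
    assert (i = length A + 0) by (eapply NoDup_nth_error_inj; eauto).
    assert (i' = length A + length q1) by (eapply NoDup_nth_error_inj; eauto).
    assert (j = j') by (eapply NoDup_nth_error_inj; eauto). subst.
    apply nth_error_In with (n := j' - length A).
    apply nth_error_segment_inv with B; auto; lia.
Qed.

Lemma leP_segment A q B u v :
  NoDup (A ++ q ++ B) -> In u q -> In v q ->
  leP G q u v <-> leP G (A ++ q ++ B) u v.
Proof.
  intros Hp Hu Hv. split.
  - intros (i & j & Hi & Hj & Hij). exists (length A + i), (length A + j).
    repeat split; try apply nth_error_segment; auto; lia.
  - intros (i & j & Hi & Hj & Hij).
    destruct (In_nth_error _ _ Hu) as [k Hk].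
    destruct (In_nth_error _ _ Hv) as [k' Hk'].
    pose proof (nth_error_segment A q B _ _ Hk).
    pose proof (nth_error_segment A q B _ _ Hk').
    assert (i = length A + k) by (eapply NoDup_nth_error_inj; eauto).
    assert (j = length A + k') by (eapply NoDup_nth_error_inj; eauto).
    exists k, k'. repeat split; auto; lia.
Qed.

Lemma is_path_segment A q B : is_path G (A ++ q ++ B) -> q <> [] -> is_path G q.
Proof.
  intros (_ & Hp & Hadj) Hq. split; [exact Hq|]. split.
  - exact (NoDup_app_remove_r _ _ (NoDup_app_remove_l _ _ Hp)).
  - intros i u v Hu Hv. apply (Hadj (length A + i)); [now apply nth_error_segment|].
    rewrite <- Nat.add_succ_r. now apply nth_error_segment.
Qed.

Lemma has_edge_segment A q B u v : has_edge G q u v -> has_edge G (A ++ q ++ B) u v.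
Proof.
  intros [i [[H1 H2] | [H1 H2]]]; exists (length A + i); [left | right];
    (split; [|rewrite <- Nat.add_succ_r]; now apply nth_error_segment).
Qed.

Lemma is_subpath_segment A q B s t r :
  is_subpath G q s t r -> is_subpath G (A ++ q ++ B) s t r.
Proof.
  intros (A' & r' & B' & -> & Hr & Hs & Ht).
  exists (A ++ A'), r', (B' ++ B). repeat split; auto.
  now rewrite <- !app_assoc.
Qed.

Lemma is_subpath_forward p a b q :
  NoDup p -> leP G p a b -> a <> b -> is_subpath G p a b q ->
  exists A B, p = A ++ q ++ B /\ first G q = Some a /\ final G q = Some b.
Proof.
  intros Hp Hab Hne (A & q' & B & Ep & [-> | ->] & Ha & Hb); [eauto|].
  exfalso. apply Hne.
  assert (Hb' : first G q' = Some b)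
    by (unfold final in Hb; now rewrite rev_involutive in Hb).
  assert (Ha' : final G q' = Some a) by exact Ha.
  assert (Hq'a : In a q')
    by (destruct (final_Some_snoc _ _ Ha') as [q1 ->]; apply in_or_app; simpl; auto).
  subst p. apply (leP_antisym (A ++ q' ++ B)); auto.
  exact (proj1 (proj1 (In_segment_iff_leP A q' B b a a Hp Hb' Ha') Hq'a)).
Qed.

End Segments.

Section SegmentGrainLine.
Variables (G : graph) (M : nat) (x y : vtx G) (L : vtx G -> Prop)
  (le : vtx G -> vtx G -> Prop) (P : nat -> list (vtx G)).
Hypothesis Hgl : grain_line G M x y L le P.
Variables (l1 l2 : vtx G) (N : nat) (Q : nat -> list (vtx G)).
Hypotheses (HMN : M <= N) (Hl1 : L l1) (Hl2 : L l2) (Hl12 : ltL G le l1 l2)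
  (Hgrains : grains G L le P N (fun v => v = l1 \/ v = l2))
  (HQ : forall n, N <= n -> is_subpath G (P n) l1 l2 (Q n)).

Local Notation L12 := (fun v => L v /\ le l1 v /\ le v l2).

Lemma grain_line_NoDup n : M <= n -> NoDup (P n).
Proof.
  intros Hn. destruct Hgl as (_ & _ & _ & _ & _ & _ & _ & Hpaths & _).
  apply (Hpaths n Hn).
Qed.

Lemma Q_segment n : N <= n ->
  exists A B, P n = A ++ Q n ++ B /\ first G (Q n) = Some l1 /\ final G (Q n) = Some l2.
Proof.
  intros Hn. apply is_subpath_forward; auto.
  - apply grain_line_NoDup. lia.
  - apply (proj2 (Hgrains n Hn)); auto. apply Hl12.
  - apply Hl12.
Qed.

Lemma In_Q_iff_leP n v : N <= n ->
  In v (Q n) <-> leP G (P n) l1 v /\ leP G (P n) v l2.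
Proof.
  intros Hn. destruct (Q_segment n Hn) as (A & B & EP & Ha & Hb).
  pose proof (grain_line_NoDup n ltac:(lia)) as Hp. rewrite EP in Hp |- *.
  now apply In_segment_iff_leP.
Qed.

Lemma In_Q_In_P n v : N <= n -> In v (Q n) -> In v (P n).
Proof.
  intros Hn Hv. destruct (Q_segment n Hn) as (A & B & -> & _).
  apply in_or_app. right. apply in_or_app. now left.
Qed.

Lemma In_Q_iff_L12 j n v : L v -> In v (P j) -> N <= j < n ->
  In v (Q n) <-> le l1 v /\ le v l2.
Proof.
  intros Hv Hvj Hjn.
  destruct Hgl as (_ & _ & _ & _ & _ & _ & _ & _ & _ & _ & _ & HGL3).
  assert (Hbelow : forall u, L u -> In u (P j) -> L_below G M L P n u)
    by (intros u Hu Huj; split; [exact Hu | exists j; repeat split; auto; lia]).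
  assert (Hends : In l1 (P j) /\ In l2 (P j)).
  { destruct (Hgrains j ltac:(lia)) as [Hon _]. split; apply Hon; auto. }
  rewrite In_Q_iff_leP by lia.
  rewrite !HGL3 by (lia || apply Hbelow; tauto).
  reflexivity.
Qed.

Lemma L_below_segment n v :
  L_below G N L12 Q n v -> L_below G M L P n v /\ In v (Q n).
Proof.
  intros [(Hv & Hv1 & Hv2) (k & Hk & Hkn & Hvk)].
  assert (Hvk' : In v (P k)) by now apply In_Q_In_P.
  split.
  - split; [exact Hv | exists k; repeat split; auto; lia].
  - apply (In_Q_iff_L12 k); auto.
Qed.

Lemma segment_paths n : N <= n -> is_ab_path G l1 l2 (Q n).
Proof.
  intros Hn. destruct (Q_segment n Hn) as (A & B & EP & Ha & Hb).
  destruct Hgl as (_ & _ & _ & _ & _ & _ & _ & Hpaths & _).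
  split; [|auto].
  destruct (Hpaths n ltac:(lia)) as [Hpath _]. rewrite EP in Hpath.
  apply (is_path_segment G A _ B Hpath). intros E. rewrite E in Ha. discriminate.
Qed.

Lemma segment_edge_disjoint n m : N <= n -> N <= m -> n <> m ->
  edge_disjoint G (Q n) (Q m).
Proof.
  intros Hn Hm Hnm u v [Hn' Hm'].
  destruct (Q_segment n Hn) as (A & B & EP & _).
  destruct (Q_segment m Hm) as (A' & B' & EP' & _).
  destruct Hgl as (_ & _ & _ & _ & _ & _ & _ & _ & Hdisj & _).
  apply (Hdisj n m ltac:(lia) ltac:(lia) Hnm u v).
  rewrite EP, EP'. split; now apply has_edge_segment.
Qed.

Lemma segment_GL1 v :
  L12 v <-> exists m, N <= m /\ forall n, N <= n -> (In v (Q n) <-> m <= n).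
Proof.
  destruct Hgl as (_ & _ & _ & _ & _ & _ & _ & _ & _ & HGL1 & HGL2 & _).
  split.
  - intros (Hv & Hint).
    destruct (proj1 (HGL1 v) Hv) as (m0 & _ & Hm0).
    assert (Hj : In v (P (Nat.max m0 N))) by (apply Hm0; lia).
    destruct (upward_closed_final_segment (fun n => N <= n /\ In v (Q n)) (S (Nat.max m0 N)))
      as [m Hm].
    + split; [lia|]. apply (In_Q_iff_L12 (Nat.max m0 N)); auto; lia.
    + intros n [Hn Hvn]. split; [lia|].
      apply (In_Q_iff_L12 n); auto using In_Q_In_P.
    + exists m. split; [now apply (proj2 (Hm m))|].
      intros n Hn. rewrite <- (Hm n). tauto.
  - intros (m & Hm & Hvm).
    assert (Hv0 : In v (Q m)) by (apply Hvm; lia).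
    assert (Hv1 : In v (Q (S m))) by (apply Hvm; lia).
    assert (Hv : L v).
    { apply NNPP. intros Hv.
      apply (HGL2 m v ltac:(lia) (In_Q_In_P m v Hm Hv0) Hv (S m) ltac:(lia) ltac:(lia)).
      apply In_Q_In_P; auto. }
    split; [exact Hv|].
    apply (In_Q_iff_L12 m (S m)); auto using In_Q_In_P.
Qed.

Lemma segment_GL2 n v : N <= n -> In v (Q n) -> ~ L12 v ->
  forall m, N <= m -> m <> n -> ~ In v (Q m).
Proof.
  intros Hn Hvn Hnot m Hm Hmn Hvm.
  destruct (classic (L v)) as [Hv | Hv].
  - apply Hnot. split; [exact Hv|].
    destruct (Nat.lt_gt_cases n m) as [[Hlt | Hlt] _]; [lia | |].
    + apply (In_Q_iff_L12 n m); auto using In_Q_In_P.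
    + apply (In_Q_iff_L12 m n); auto using In_Q_In_P.
  - destruct Hgl as (_ & _ & _ & _ & _ & _ & _ & _ & _ & _ & HGL2 & _).
    apply (HGL2 n v ltac:(lia) (In_Q_In_P n v Hn Hvn) Hv m ltac:(lia) Hmn).
    now apply In_Q_In_P.
Qed.

Lemma segment_GL3 n : N <= n -> forall u v,
  L_below G N L12 Q n u -> L_below G N L12 Q n v -> (leP G (Q n) u v <-> le u v).
Proof.
  intros Hn u v Hu Hv.
  destruct (L_below_segment n u Hu) as [HuP HuQ].
  destruct (L_below_segment n v Hv) as [HvP HvQ].
  destruct (Q_segment n Hn) as (A & B & EP & _).
  destruct Hgl as (_ & _ & _ & _ & _ & _ & _ & _ & _ & _ & _ & HGL3).
  pose proof (grain_line_NoDup n ltac:(lia)) as Hp. rewrite EP in Hp.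
  rewrite (leP_segment G A (Q n) B u v Hp HuQ HvQ), <- EP.
  apply HGL3; auto. lia.
Qed.

Theorem segment_grain_line : grain_line G N l1 l2 L12 le Q.
Proof.
  destruct Hgl as (_ & [f Hf] & (Hrefl & Hanti & Htrans & Htot) & _).
  destruct Hl12 as [Hle12 Hne12].
  refine (conj Hne12 (conj _ (conj _ (conj _ (conj _ (conj _ (conj _
    (conj segment_paths (conj segment_edge_disjoint
    (conj segment_GL1 (conj segment_GL2 segment_GL3))))))))))).
  - exists f. intros u v Hu Hv. apply Hf; tauto.
  - split; [|split; [|split]].
    + intros u Hu. apply Hrefl. tauto.
    + intros u v Hu Hv. apply Hanti; tauto.
    + intros u v w Hu Hv Hw. apply Htrans; tauto.
    + intros u v Hu Hv. apply Htot; tauto.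
  - auto.
  - auto.
  - intros v Hv. tauto.
  - intros v Hv. tauto.
Qed.

Theorem segment_wildly_presented :
  wildly_presented G M L le P -> wildly_presented G N L12 le Q.
Proof.
  intros Hwild n Hn l l' Hl Hl' Hll' q Hq.
  destruct (L_below_segment n l Hl) as [HlP _].
  destruct (L_below_segment n l' Hl') as [HlP' _].
  destruct (Q_segment n Hn) as (A & B & EP & _).
  assert (HqP : is_subpath G (P n) l l' q) by (rewrite EP; now apply is_subpath_segment).
  destruct (Hwild n ltac:(lia) l l' HlP HlP' Hll' q HqP)
    as (w & Hwq & Hw & [Hlw Hnlw] & [Hwl' Hnwl']).
  destruct Hgl as (_ & _ & (_ & _ & Htrans & _) & _).
  destruct Hl as [(HLl & Hl1l & _) _]. destruct Hl' as [(HLl' & _ & Hl'2) _].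
  exists w. repeat split; auto.
  - now apply (Htrans l1 l w).
  - now apply (Htrans w l' l2).
Qed.

End SegmentGrainLine.

Theorem lemma5p6 (G : graph) (x y : vtx G) (L : vtx G -> Prop)
  (le : vtx G -> vtx G -> Prop) (P : nat -> list (vtx G))
  (l1 l2 : vtx G) (N : nat) (Q : nat -> list (vtx G)) :
  grain_line G 0 x y L le P ->
  L l1 -> L l2 -> ltL G le l1 l2 ->
  grains G L le P N (fun v => v = l1 \/ v = l2) ->
  (forall n, N <= n -> is_subpath G (P n) l1 l2 (Q n)) ->
  grain_line G N l1 l2 (fun v => L v /\ le l1 v /\ le v l2) le Q /\
  (wildly_presented G 0 L le P ->
   wildly_presented G N (fun v => L v /\ le l1 v /\ le v l2) le Q).
Proof.
  intros Hgl Hl1 Hl2 Hl12 Hgrains HQ. split.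
  - eapply segment_grain_line; eauto. lia.
  - eapply segment_wildly_presented; eauto. lia.
Qed.
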